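(* Let $\alpha,\beta,\sigma>0$ and let $X\sim\mathcal{N}(\alpha,\sigma^2)$. Then $$\mathbb{E}\left[\tanh'\left(\frac{\beta X}{\sigma^2}\right) X\right]\ge 0,$$ where $\tanh'$ denotes the derivative of the hyperbolic tangent. *)

From HB Require Import structures.
From mathcomp Require Import all_boot all_order all_algebra.
From mathcomp Require Import all_classical all_reals all_analysis.
Set Implicit Arguments. Unset Strict Implicit. Unset Printing Implicit Defensive.
Import Order.TTheory GRing.Theory Num.Theory.
Local Open Scope ring_scope.

Definition tanh {R : realType} (x : R) : R :=
  (expR x - expR (- x)) / (expR x + expR (- x)).

From HB Require Import structures.
From mathcomp Require Import all_boot all_order all_algebra.
From mathcomp Require Import all_classical all_reals all_analysis.
From mathcomp Require Import lra ring measurable_realfun.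
Import Order.TTheory GRing.Theory Num.Theory numFieldNormedType.Exports.
Local Open Scope ring_scope.

(* The derivative of tanh is sech^2, which is even and positive, so
   f(x) = tanh'(c x) x with c = beta / sigma^2 is odd, bounded, and nonnegative
   on [0, +oo).  For the density p of N(alpha, sigma^2) with alpha >= 0 one has
   p(-x) <= p(x) when x >= 0, so folding the integral of f p at 0 gives
   E[f(X)] = int_0^oo f(x) (p(x) - p(-x)) dx >= 0. *)

Section sech2.
Context {R : realType}.
Implicit Types y : R.

Definition sech2 y : R := 4 / (expR y + expR (- y)) ^+ 2.

Let cosh2_gt0 y : 0 < expR y + expR (- y).
Proof. by rewrite addr_gt0 ?expR_gt0. Qed.

Let is_derive_expRN y : is_derive y 1 (fun x => expR (- x)) (- expR (- y)).
Proof.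
have := @is_derive1_comp R expR -%R y (expR (- y)) (-1) _ _.
by rewrite mulrN1; apply.
Qed.

Lemma derive1_tanh y : derive1 (@tanh R) y = sech2 y.
Proof.
set a := expR y; set b := expR (- y).
have num : is_derive y 1 (fun x => expR x - expR (- x)) (a + b).
  by have := is_deriveB (is_derive_expR y) (is_derive_expRN y); rewrite opprK.
have den : is_derive y 1 (fun x => expR x + expR (- x)) (a - b).
  exact: is_deriveD (is_derive_expR y) (is_derive_expRN y).
have := is_deriveM num
  (@is_deriveV R (fun x => expR x + expR (- x)) y _ 1 (negbT (gt_eqF (cosh2_gt0 y))) den).
rewrite derive1E => -[_ ->]; rewrite /sech2 -/a -/b /GRing.scale /=.
have ab : a * b = 1 by rewrite /a /b -expRD subrr expR0.
have ab0 : a + b != 0 by rewrite gt_eqF ?cosh2_gt0.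
transitivity (4 * (a * b) / (a + b) ^+ 2); last by rewrite ab mulr1.
by field.
Qed.

Lemma sech2_ge0 y : 0 <= sech2 y.
Proof. by rewrite divr_ge0 // exprn_ge0 // ltW. Qed.

Lemma sech2N y : sech2 (- y) = sech2 y.
Proof. by rewrite /sech2 opprK addrC. Qed.

Lemma continuous_sech2 : continuous sech2.
Proof.
move=> y; apply: cvgM; first exact: cvg_cst.
apply: cvgV; first by rewrite expf_neq0 // gt_eqF.
apply: (continuous_comp (f := fun x => expR x + expR (- x)) (g := fun t => t ^+ 2));
  last exact: exprn_continuous.
apply: cvgD; first exact: continuous_expR.
apply: (continuous_comp (f := -%R) (g := expR)); [exact: cvgN | exact: continuous_expR].
Qed.

Lemma normr_sech2M_le y : `|sech2 y * y| <= 4.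
Proof.
have cosh2_ge : 1 + `|y| <= expR y + expR (- y).
  case: (leP 0 y) => y0; [rewrite ger0_norm // | rewrite ltr0_norm //].
    by have := expR_ge1Dx y; have := expR_gt0 (- y); lra.
  by have := expR_ge1Dx (- y); have := expR_gt0 y; lra.
rewrite normrM ger0_norm ?sech2_ge0 // /sech2 mulrAC ler_pdivrMr ?exprn_gt0 //.
move: (expR y + expR (- y)) cosh2_ge => s ge_s.
have := normr_ge0 y; rewrite expr2; nra.
Qed.

Lemma normr_sech2_scaleM_le x c : 0 < c -> `|sech2 (c * x) * x| <= 4 / c.
Proof.
move=> c0; rewrite ler_pdivlMr // -[X in _ * X](gtr0_norm c0) -normrM -mulrA (mulrC x).
exact: normr_sech2M_le.
Qed.

End sech2.

Section reflection.
Context {R : realType}.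
Local Notation mu := (@lebesgue_measure R).
Local Open Scope classical_set_scope.
Local Open Scope ereal_scope.

Lemma ge0_integral_reflection_le (k : R -> R) : continuous k ->
    mu.-integrable setT (EFin \o k) ->
    (forall x, 0 <= x -> 0 <= - k (- x) <= k x)%R ->
  0 <= \int[mu]_x (k x)%:E.
Proof.
move=> ck ik kN.
have mk : forall A : set R, measurable_fun A (EFin \o k).
  by move=> A; apply/measurable_EFinP/measurable_funTS; exact: continuous_measurable_fun.
have kn x : (x <= 0)%R -> (0 <= - k x)%R.
  by rewrite -oppr_ge0 => /kN /andP[]; rewrite opprK.
have ckN : continuous (fun x => - k (- x))%R.
  move=> x; apply: cvgN; apply: (continuous_comp (f := -%R)); [exact: cvgN | exact: ck].
have -> : [set: R] = `]-oo, 0%R] `|` `]0%R, +oo[.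
  apply/seteqP; split => x //= _.
  by rewrite !in_itv /= andbT; case: (leP x 0%R) => _; [left|right].
rewrite integral_setU //; [|exact: mk|]; last first.
  apply/disj_setPS => x [] /=; rewrite !in_itv /= andbT => x0 x0'.
  by move: x0'; rewrite ltNge x0.
have -> : \int[mu]_(x in `]-oo, 0%R]) (k x)%:E =
    - \int[mu]_(x in `[0%R, +oo[) (- k (- x))%:E.
  have := @ge0_integration_by_substitutionNy R (fun x => - k x)%R 0%R.
  rewrite oppr0 => <-; first last.
  - by move=> x; rewrite in_itv /= => /ltW /kn.
  - by apply: continuous_subspaceT => x; apply: cvgN; exact: ck.
  rewrite -integral_ge0N; last by move=> x; rewrite /= in_itv /= => /kn.
  by apply: eq_integral => x _; rewrite EFinN oppeK.
rewrite integral_itv_obnd_cbnd; last exact: mk.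
have fin : \int[mu]_(x in `[0%R, +oo[) (k x)%:E \is a fin_num.
  by apply: integrable_fin_num => //; exact: integrableS ik.
rewrite addeC sube_ge0 ?fin ?orbT //.
apply: ge0_le_integral => //.
- by move=> x; rewrite /= in_itv /= andbT => /kN /andP[].
- by apply/measurable_EFinP/measurable_funTS; exact: continuous_measurable_fun ckN.
- exact: mk.
- by move=> x; rewrite /= in_itv /= andbT => /kN /andP[].
Qed.
End reflection.

Section normal_odd.
Context {R : realType}.
Local Notation mu := (@lebesgue_measure R).
Local Open Scope ereal_scope.

Lemma normal_pdfN_le (m s x : R) : s != 0%R -> (0 <= m)%R -> (0 <= x)%R ->
  (normal_pdf m s (- x) <= normal_pdf m s x)%R.
Proof.
move=> s0 m0 x0; rewrite /normal_pdf (negbTE s0) ler_wpM2l ?normal_peak_ge0 //.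
rewrite /normal_fun ler_expR !mulNr lerN2 ler_pM2r ?invr_gt0 ?mulrn_wgt0 ?exprn_even_gt0 //.
nra.
Qed.

Lemma integral_normal_prob (m s : R) (f : R -> \bar R) U :
    measurable U -> measurable_fun U f ->
    \int[normal_prob m s]_(x in U) `|f x| < +oo ->
  \int[normal_prob m s]_(x in U) f x =
  \int[mu]_(x in U) (f x * (normal_pdf m s x)%:E).
Proof.
move=> mU mf finf.
(* the Radon-Nikodym derivative of [normal_prob m s] is [normal_pdf m s] up to a null set *)
rewrite -(Radon_Nikodym_change_of_variables (normal_prob_dominates m s)) //=; last first.
  exact/integrableP.
apply: ae_eq_integral => //.
- apply: emeasurable_funM => //; apply: (measurable_int mu).
  apply: (integrableS _ _ (@subsetT _ _)) => //=.
  by apply: Radon_Nikodym_integrable; exact: normal_prob_dominates.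
- apply: emeasurable_funM => //=; apply/measurableT_comp => //=.
  by apply/measurable_funTS; exact: measurable_normal_pdf.
- apply: ae_eqe_mul2l => /=.
  rewrite Radon_NikodymE //=; first exact: normal_prob_dominates.
  move=> dom; case: cid => /= h [_ h_int h_dens].
  apply: integral_ae_eq => //=.
  + exact: integrableS h_int.
  + by apply/measurable_funTS/measurableT_comp => //; exact: measurable_normal_pdf.
  + by move=> E _ mE; rewrite -h_dens.
Qed.

Lemma normal_prob_integral_odd_ge0 (m s : R) (f : R -> R) :
    (0 <= m)%R -> s != 0%R -> continuous f -> [bounded f x | x in setT] ->
    (forall x, f (- x) = - f x)%R -> (forall x, 0 <= x -> 0 <= f x)%R ->
  0 <= \int[normal_prob m s]_x (f x)%:E.
Proof.
move=> m0 s0 cf bf fN f0.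
have mf : measurable_fun setT f by exact: continuous_measurable_fun.
have f_int : (normal_prob m s).-integrable setT (EFin \o f).
  apply: measurable_bounded_integrable => //.
  by apply: (le_lt_trans (probability_le1 _ measurableT)); exact: ltry.
case/integrableP: f_int => mEf f_fin.
rewrite integral_normal_prob //.
under eq_integral do rewrite -EFinM.
apply: ge0_integral_reflection_le.
- by move=> x; apply: cvgM; [exact: cf | exact: continuous_normal_pdf].
- have := integrableMl measurableT (integrable_normal_pdf m s) mf bf.
  by apply: eq_integrable => // x _; rewrite /= EFinM muleC.
- move=> x x0; rewrite fN mulNr opprK.
  by rewrite mulr_ge0 ?normal_pdf_ge0 ?f0 //= ler_wpM2l ?f0 ?normal_pdfN_le.
Qed.

Lemma expectation_normal_comp {d} {T : measurableType d} {P : probability T R}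
    {X : {RV P >-> R}} {m s : R} (f : R -> R) :
    distribution P X = normal_prob m s ->
    measurable_fun setT f -> [bounded f x | x in setT] ->
  'E_P[f \o X] = \int[normal_prob m s]_x (f x)%:E.
Proof.
move=> hX mf bf.
have mX : measurable_fun setT (X : T -> measurableTypeR R) := measurable_funPT X.
have fX_int : P.-integrable setT (EFin \o (f \o X)).
  apply: measurable_bounded_integrable => //.
  + by apply: (le_lt_trans (probability_le1 _ measurableT)); exact: ltry.
  + exact: measurableT_comp.
  + have [M [M_real fM]] := bf.
    by exists M; split => // N MN w _; exact: fM.
have mEf : measurable_fun setT (EFin \o f : measurableTypeR R -> \bar R).
  exact/measurable_EFinP.
have := integral_pushforward mX mEf fX_int measurableT.
rewrite preimage_setT unlock => <-.
by rewrite [pushforward _ _]hX.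
Qed.

End normal_odd.

Local Open Scope ereal_scope.

Theorem lemma1 (R : realType) (alpha beta sigma : R)
  (halpha : (0 < alpha)%R) (hbeta : (0 < beta)%R) (hsigma : (0 < sigma)%R)
  (d : measure_display) (T : measurableType d) (P : probability T R)
  (X : {RV P >-> R})
  (hX : distribution P X = normal_prob alpha sigma) :
  0 <= 'E_P[fun w => (derive1 (@tanh R) (beta * X w / sigma ^+ 2) * X w)%R].
Proof.
set c := (beta / sigma ^+ 2)%R.
have c_gt0 : (0 < c)%R by rewrite divr_gt0 // exprn_gt0.
pose f x := (sech2 (c * x) * x)%R.
have f_cont : continuous f.
  move=> x; apply: cvgM; last exact: cvg_id.
  apply: (continuous_comp (f := fun x => c * x)%R); last exact: continuous_sech2.
  by apply: cvgM; [exact: cvg_cst | exact: cvg_id].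
have f_bounded : [bounded f x | x in setT].
  exists (4 / c)%R; split => [|M /ltW leM x _]; first exact: num_real.
  by rewrite /f; apply: le_trans leM; exact: normr_sech2_scaleM_le.
have fN x : f (- x)%R = (- f x)%R by rewrite /f !mulrN sech2N.
have f_ge0 x : (0 <= x)%R -> (0 <= f x)%R by move=> x0; rewrite mulr_ge0 ?sech2_ge0.
have -> : (fun w => derive1 (@tanh R) (beta * X w / sigma ^+ 2) * X w)%R = f \o X.
  by apply/funext => w; rewrite /= derive1_tanh /f /c [(beta * _ / _)%R]mulrAC.
rewrite (expectation_normal_comp f hX (continuous_measurable_fun f_cont) f_bounded).
exact: normal_prob_integral_odd_ge0 (ltW halpha) (lt0r_neq0 hsigma) f_cont f_bounded fN f_ge0.
Qed.
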